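(* Let $X\subseteq\mathbb{R}^d$ be a full-dimensional convex body and let $\lambda>0$ be such that some translate $c+\lambda^{-1}[0,1]^d$ ($c\in\mathbb{R}^d$) is contained in $X$. Then for every real $n>0$, $$\mathrm{Flt}^{\mathbb{R}}_d(X)\le\tfrac1n\,\mathrm{Flt}_d(n\cdot X)\le\tfrac{n+\lambda}{n}\,\mathrm{Flt}^{\mathbb{R}}_d(X).$$ In particular $\frac1n\mathrm{Flt}_d(nX)\to\mathrm{Flt}^{\mathbb{R}}_d(X)$ as $n\to\infty$.
   Context: Convex body: non-empty compact convex subset of $\mathbb{R}^d$; $\mathrm{width}(K)=\min_{u\in(\mathbb{Z}^d)^*\setminus\{0\}}\max_{x,y\in K}|u(x)-u(y)|$. A unimodular (resp. $\mathbb{R}$-unimodular) copy of $Y\subseteq\mathbb{R}^d$ is $\{Ay+b:y\in Y\}$ with $A\in\mathrm{GL}(d,\mathbb{Z})$ and $b\in\mathbb{Z}^d$ (resp. $b\in\mathbb{R}^d$). For bounded $X$: $\mathrm{Flt}_d(X)=\sup\{\mathrm{width}(K): K\text{ convex body not containing a unimodular copy of }X\}$ and $\mathrm{Flt}^{\mathbb{R}}_d(X)=\sup\{\mathrm{width}(K): K\text{ convex body not containing an }\mathbb{R}\text{-unimodular copy of }X\}$. *)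

From Stdlib Require Import Reals ZArith.
Open Scope R_scope.

(* Points of R^d are represented as functions nat -> R whose coordinates of
   index >= d vanish; subsets of R^d are predicates on such functions. *)
Definition pt := nat -> R.

Fixpoint sumd (d : nat) (f : nat -> R) : R :=
  match d with O => 0 | S k => sumd k f + f k end.

Definition inRd (d : nat) (x : pt) : Prop := forall i, (d <= i)%nat -> x i = 0.

Definition lin (d : nat) (u x : pt) : R := sumd d (fun i => u i * x i).

Definition convex (d : nat) (K : pt -> Prop) : Prop :=
  forall x y t, K x -> K y -> 0 <= t <= 1 ->
    K (fun i => t * x i + (1 - t) * y i).

Definition bounded (d : nat) (K : pt -> Prop) : Prop :=
  exists M, forall x, K x -> forall i, Rabs (x i) <= M.

Definition closed_set (d : nat) (K : pt -> Prop) : Prop :=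
  forall (s : nat -> pt) (x : pt), (forall k, K (s k)) ->
    (forall i, Un_cv (fun k => s k i) (x i)) -> K x.

Definition convex_body (d : nat) (K : pt -> Prop) : Prop :=
  (forall x, K x -> inRd d x) /\ (exists x, K x) /\ convex d K /\
  bounded d K /\ closed_set d K.

(* Dual lattice (Z^d)^*: integer vectors u (only coordinates < d matter). *)
Definition zvec := nat -> Z.
Definition zvec_nonzero (d : nat) (u : zvec) : Prop := exists i, (i < d)%nat /\ u i <> 0%Z.
Definition zR (u : zvec) : pt := fun i => IZR (u i).

(* width of K in direction u: max_{x,y in K} |u(x) - u(y)| (sup = max for compact K) *)
Definition width_dir (d : nat) (K : pt -> Prop) (u : zvec) (w : R) : Prop :=
  is_lub (fun v => exists x y, K x /\ K y /\ v = Rabs (lin d (zR u) x - lin d (zR u) y)) w.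

Definition width_of (d : nat) (K : pt -> Prop) (w : R) : Prop :=
  (exists u, zvec_nonzero d u /\ width_dir d K u w) /\
  (forall u w', zvec_nonzero d u -> width_dir d K u w' -> w <= w').

Definition zmat := nat -> nat -> Z.
Definition unimodular (d : nat) (A : zmat) : Prop :=
  exists B : zmat, forall i j, (i < d)%nat -> (j < d)%nat ->
    sumd d (fun k => IZR (A i k) * IZR (B k j)) = (if Nat.eqb i j then 1 else 0).

Definition affine (d : nat) (A : zmat) (b : pt) (y : pt) : pt :=
  fun i => if Nat.ltb i d then sumd d (fun j => IZR (A i j) * y j) + b i else 0.

Definition contains_copy (d : nat) (K X : pt -> Prop) : Prop :=
  exists (A : zmat) (b : zvec), unimodular d A /\ forall y, X y -> K (affine d A (zR b) y).

Definition contains_Rcopy (d : nat) (K X : pt -> Prop) : Prop :=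
  exists (A : zmat) (b : pt), unimodular d A /\ inRd d b /\
    forall y, X y -> K (affine d A b y).

(* The set whose supremum is Flt_d(X), resp. Flt^R_d(X). *)
Definition FltSet (d : nat) (X : pt -> Prop) (w : R) : Prop :=
  exists K, convex_body d K /\ ~ contains_copy d K X /\ width_of d K w.
Definition FltRSet (d : nat) (X : pt -> Prop) (w : R) : Prop :=
  exists K, convex_body d K /\ ~ contains_Rcopy d K X /\ width_of d K w.

(* "Flt_d(X) <= r" (as a supremum in the extended reals) *)
Definition Flt_le (d : nat) (X : pt -> Prop) (r : R) : Prop := is_upper_bound (FltSet d X) r.
Definition FltR_le (d : nat) (X : pt -> Prop) (r : R) : Prop := is_upper_bound (FltRSet d X) r.

Definition scale_set (n : R) (X : pt -> Prop) : pt -> Prop :=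
  fun z => exists x, X x /\ z = (fun i => n * x i).

(* Shrinking by a factor n turns a unimodular copy of nX inside nK into an
   R-unimodular copy of X inside K, which gives the lower bound.  Conversely,
   suppose K/(n+lam) contains A X + b with b real.  The cube of side 1/lam in X
   contains a point y0 with lam A y0 + (n+lam) b integral, and
   X contains (n X + lam y0)/(n+lam) by convexity; scaling its image by n+lam
   yields A (n X) + integer vector inside K.  Hence every body without a
   unimodular copy of nX has width at most (n+lam) Flt^R_d(X), and the limit
   follows by squeezing. *)

From Stdlib Require Import Reals Lra Lia ZArith FunctionalExtensionality.
Open Scope R_scope.

Lemma sumd_ext d f g : (forall i, (i < d)%nat -> f i = g i) -> sumd d f = sumd d g.
Proof.
  induction d as [|d IH]; simpl; intros H; auto.
  rewrite IH by (intros; apply H; lia); rewrite H by lia; auto.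
Qed.

Lemma sumd_scal d s f : sumd d (fun i => s * f i) = s * sumd d f.
Proof. induction d as [|d IH]; simpl; [ring | rewrite IH; ring]. Qed.

Lemma sumd_plus d f g : sumd d (fun i => f i + g i) = sumd d f + sumd d g.
Proof. induction d as [|d IH]; simpl; [ring | rewrite IH; ring]. Qed.

Lemma sumd_opp d f : sumd d (fun i => - f i) = - sumd d f.
Proof. induction d as [|d IH]; simpl; [ring | rewrite IH; ring]. Qed.

Lemma sumd_swap n m F :
  sumd n (fun j => sumd m (fun k => F j k)) = sumd m (fun k => sumd n (fun j => F j k)).
Proof.
  induction n as [|n IH]; simpl.
  - induction m as [|m IHm]; simpl; [auto | rewrite <- IHm; ring].
  - rewrite IH, <- sumd_plus; auto.
Qed.

Lemma sumd_delta d i a :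
  (i < d)%nat -> sumd d (fun k => (if Nat.eqb i k then 1 else 0) * a k) = a i.
Proof.
  induction d as [|d IH]; intros Hi; simpl; [lia|].
  destruct (Nat.eqb_spec i d) as [->|Hne].
  - rewrite (sumd_ext d _ (fun k => 0 * a k)), sumd_scal; [ring|].
    intros k Hk; destruct (Nat.eqb_spec d k); [lia | ring].
  - rewrite IH by lia; ring.
Qed.

Fixpoint zsum (d : nat) (f : nat -> Z) : Z :=
  match d with O => 0%Z | S k => (zsum k f + f k)%Z end.

Lemma IZR_zsum d f : IZR (zsum d f) = sumd d (fun j => IZR (f j)).
Proof. induction d as [|d IH]; simpl; [auto | rewrite plus_IZR, IH; auto]. Qed.

Lemma lin_scale d u s x : lin d u (fun i => s * x i) = s * lin d u x.
Proof. unfold lin; rewrite <- sumd_scal; apply sumd_ext; intros; ring. Qed.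

Lemma is_lub_ext (P Q : R -> Prop) w : (forall v, P v <-> Q v) -> is_lub P w -> is_lub Q w.
Proof.
  intros E [Hub Hleast]; split.
  - intros v Hv; apply Hub, E, Hv.
  - intros b Hb; apply Hleast; intros v Hv; apply Hb, E, Hv.
Qed.

Lemma is_lub_scale (S : R -> Prop) s w : 0 < s -> is_lub S w ->
  is_lub (fun v => exists a, S a /\ v = s * a) (s * w).
Proof.
  intros Hs [Hub Hleast]; split.
  - intros v [a [Ha ->]]; apply Rmult_le_compat_l; [lra | auto].
  - intros b Hb.
    assert (Hw : w <= b / s).
    { apply Hleast; intros a Ha.
      assert (s * a <= b) by (apply Hb; eauto).
      apply (Rmult_le_reg_l s); [lra|]; field_simplify; lra. }
    apply (Rmult_le_compat_l s) in Hw; [field_simplify in Hw; lra | lra].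
Qed.

Lemma is_lub_unscale (S : R -> Prop) s w : 0 < s ->
  is_lub (fun v => exists a, S a /\ v = s * a) w -> is_lub S (w / s).
Proof.
  intros Hs H; apply is_lub_scale with (s := / s) in H; [|apply Rinv_0_lt_compat; auto].
  replace (w / s) with (/ s * w) by (unfold Rdiv; ring).
  eapply is_lub_ext; [|exact H]; intros v; split.
  - intros [a [[b [Hb ->]] ->]]; replace (/ s * (s * b)) with b by (field; lra); auto.
  - intros Hv; exists (s * v); split; [eauto | field; lra].
Qed.

Lemma scale_set_unscale s K x : s <> 0 -> scale_set s K x -> K (fun i => / s * x i).
Proof.
  intros Hs [y [Hy ->]].
  replace (fun i => / s * (s * y i)) with y; auto.
  apply functional_extensionality; intros; field; auto.
Qed.

Lemma Un_cv_scal (u : nat -> R) l a : Un_cv u l -> Un_cv (fun k => a * u k) (a * l).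
Proof.
  intros Hu; apply (CV_mult (fun _ => a)); auto.
  intros eps Heps; exists O; intros; unfold R_dist; rewrite Rminus_diag, Rabs_R0; auto.
Qed.

Lemma scale_convex_body d s K : 0 < s -> convex_body d K -> convex_body d (scale_set s K).
Proof.
  intros Hs (Hdim & [x0 Hx0] & Hconv & [M HM] & Hclosed).
  split; [|split; [|split; [|split]]].
  - intros x [y [Hy ->]] i Hi; rewrite (Hdim y Hy i Hi); ring.
  - exists (fun i => s * x0 i), x0; auto.
  - intros x y t [x1 [Hx1 ->]] [y1 [Hy1 ->]] Ht.
    exists (fun i => t * x1 i + (1 - t) * y1 i); split; [apply Hconv; auto|].
    apply functional_extensionality; intros; ring.
  - exists (s * M); intros x [y [Hy ->]] i.
    rewrite Rabs_mult, Rabs_right by lra; apply Rmult_le_compat_l; [lra | auto].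
  - intros sq x Hsq Hcv; exists (fun i => / s * x i); split.
    + apply (Hclosed (fun k i => / s * sq k i)).
      * intros k; apply scale_set_unscale; [lra | auto].
      * intros i; apply Un_cv_scal, Hcv.
    + apply functional_extensionality; intros; field; lra.
Qed.

Lemma scale_width_set d s K u v : 0 < s ->
  (exists x y, scale_set s K x /\ scale_set s K y /\
     v = Rabs (lin d (zR u) x - lin d (zR u) y)) <->
  (exists a, (exists x y, K x /\ K y /\ a = Rabs (lin d (zR u) x - lin d (zR u) y)) /\
     v = s * a).
Proof.
  intros Hs.
  assert (Habs : forall x y, Rabs (lin d (zR u) (fun i => s * x i) - lin d (zR u) (fun i => s * y i))
                             = s * Rabs (lin d (zR u) x - lin d (zR u) y)).
  { intros x y; rewrite !lin_scale, <- Rmult_minus_distr_l, Rabs_mult, (Rabs_right s) by lra; auto. }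
  split.
  - intros (x & y & [x1 [Hx ->]] & [y1 [Hy ->]] & ->).
    exists (Rabs (lin d (zR u) x1 - lin d (zR u) y1)); split; [exists x1, y1; auto | apply Habs].
  - intros (a & (x & y & Hx & Hy & ->) & ->).
    exists (fun i => s * x i), (fun i => s * y i).
    split; [exists x; auto | split; [exists y; auto | symmetry; apply Habs]].
Qed.

Lemma scale_width d s K w : 0 < s -> width_of d K w -> width_of d (scale_set s K) (s * w).
Proof.
  intros Hs [[u [Hu Hw]] Hmin]; split.
  - exists u; split; auto.
    eapply is_lub_ext; [intros v; symmetry; apply scale_width_set; auto | apply is_lub_scale; auto].
  - intros u' w' Hu' Hw'.
    assert (Hdir : width_dir d K u' (w' / s)).
    { apply is_lub_unscale; auto.
      eapply is_lub_ext; [|exact Hw']; intros v; apply scale_width_set; auto. }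
    specialize (Hmin u' _ Hu' Hdir).
    apply (Rmult_le_compat_l s) in Hmin; [field_simplify in Hmin; lra | lra].
Qed.

Lemma width_nonneg d K w : convex_body d K -> width_of d K w -> 0 <= w.
Proof.
  intros (_ & [x Hx] & _) [[u [_ [Hub _]]] _].
  apply Hub; exists x, x; rewrite Rminus_diag, Rabs_R0; auto.
Qed.

Lemma contains_copy_scale d n K X :
  0 < n -> contains_copy d (scale_set n K) (scale_set n X) -> contains_Rcopy d K X.
Proof.
  intros Hn (A & b & HA & Hcopy).
  exists A, (fun i => if Nat.ltb i d then / n * IZR (b i) else 0); split; [auto | split].
  - intros i Hi; destruct (Nat.ltb_spec i d); [lia | auto].
  - intros y Hy.
    destruct (Hcopy (fun i => n * y i)) as [k [Hk Ek]]; [exists y; auto|].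
    replace (affine d A _ y) with (fun i => / n * affine d A (zR b) (fun i => n * y i) i).
    + rewrite Ek; apply scale_set_unscale; [lra|]; exists k; auto.
    + apply functional_extensionality; intros i; unfold affine, zR.
      destruct (Nat.ltb_spec i d); [|ring].
      rewrite (sumd_ext d _ (fun j => n * (IZR (A i j) * y j))), sumd_scal by (intros; ring).
      field; lra.
Qed.

Lemma lattice_point_in_cube d lam (c v : pt) : 0 < lam ->
  exists q : zvec, forall i, (i < d)%nat ->
    c i <= (IZR (q i) - v i) / lam <= c i + / lam.
Proof.
  intros Hl; exists (fun i => up (lam * c i + v i)); intros i _.
  destruct (archimed (lam * c i + v i)) as [Hup1 Hup2].
  split; apply (Rmult_le_reg_l lam); auto; field_simplify; lra.
Qed.

(* Since A B = 1, A (q - B (s b)) = A q - s b: the real translation s b cancels,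
   leaving the integral one A q. *)
Lemma affine_lattice_shift d (A B : zmat) (b y z : pt) (q : zvec) s :
  (forall i j, (i < d)%nat -> (j < d)%nat ->
     sumd d (fun k => IZR (A i k) * IZR (B k j)) = (if Nat.eqb i j then 1 else 0)) ->
  (forall j, (j < d)%nat ->
     s * y j = z j + IZR (q j) - sumd d (fun m => IZR (B j m) * (s * b m))) ->
  (fun i => s * affine d A b y i) = affine d A (zR (fun i => zsum d (fun j => (A i j * q j)%Z))) z.
Proof.
  intros HAB Hy; apply functional_extensionality; intros i; unfold affine, zR.
  destruct (Nat.ltb_spec i d) as [Hi|]; [|ring].
  assert (HAv : sumd d (fun j => IZR (A i j) * sumd d (fun m => IZR (B j m) * (s * b m))) = s * b i).
  { rewrite (sumd_ext d _ (fun j => sumd d (fun m => IZR (A i j) * IZR (B j m) * (s * b m))))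
      by (intros; rewrite <- sumd_scal; apply sumd_ext; intros; ring).
    rewrite sumd_swap, <- (sumd_delta d i (fun m => s * b m)) by auto.
    apply sumd_ext; intros m Hm.
    rewrite <- (HAB i m Hi Hm), (Rmult_comm _ (s * b m)), <- sumd_scal.
    apply sumd_ext; intros; ring. }
  rewrite IZR_zsum, Rmult_plus_distr_l, <- sumd_scal.
  rewrite (sumd_ext d (fun j => s * (IZR (A i j) * y j))
    (fun j => IZR (A i j) * z j + (IZR (A i j * q j) +
              - (IZR (A i j) * sumd d (fun m => IZR (B j m) * (s * b m))))))
    by (intros j Hj; rewrite mult_IZR, Rmult_comm, Rmult_assoc, (Rmult_comm _ s), Hy by auto; ring).
  rewrite !sumd_plus, sumd_opp, HAv; ring.
Qed.

Lemma contains_Rcopy_shrink d n lam (c : pt) (X K : pt -> Prop) :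
  0 < n -> 0 < lam -> convex d X ->
  (forall y, inRd d y -> (forall i, (i < d)%nat -> c i <= y i <= c i + / lam) -> X y) ->
  contains_Rcopy d (scale_set (/ (n + lam)) K) X -> contains_copy d K (scale_set n X).
Proof.
  intros Hn Hl Hconv Hcube (A & b & [B HAB] & _ & Hcopy).
  set (s := n + lam).
  set (v := fun j => sumd d (fun m => IZR (B j m) * (s * b m))).
  destruct (lattice_point_in_cube d lam c v Hl) as [q Hq].
  set (y0 := fun j => if Nat.ltb j d then (IZR (q j) - v j) / lam else 0).
  assert (Hy0 : X y0).
  { apply Hcube.
    - intros j Hj; unfold y0; destruct (Nat.ltb_spec j d); [lia | auto].
    - intros j Hj; unfold y0; destruct (Nat.ltb_spec j d); [auto | lia]. }
  exists A, (fun i => zsum d (fun j => (A i j * q j)%Z)); split; [exists B; auto|].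
  intros z [x [Hx ->]].
  set (y := fun j => n / s * x j + (1 - n / s) * y0 j).
  assert (Hy : X y).
  { apply Hconv; auto; split; unfold s.
    - apply Rmult_le_pos; [lra | left; apply Rinv_0_lt_compat; lra].
    - apply (Rmult_le_reg_r (n + lam)); [lra|]; field_simplify; lra. }
  rewrite <- (affine_lattice_shift d A B b y (fun i => n * x i) q s HAB).
  - replace (fun i => s * affine d A b y i) with (fun i => / / s * affine d A b y i)
      by (rewrite Rinv_inv; auto).
    apply scale_set_unscale; [apply Rinv_neq_0_compat; unfold s; lra | apply Hcopy; auto].
  - intros j Hj; unfold y, y0; destruct (Nat.ltb_spec j d); [|lia].
    unfold v, s; field; lra.
Qed.

Lemma FltR_le_of_Flt_le_scale d n X r :
  0 < n -> Flt_le d (scale_set n X) r -> FltR_le d X (r / n).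
Proof.
  intros Hn Hr w (K & HK & HnoK & Hw).
  assert (n * w <= r).
  { apply Hr; exists (scale_set n K); split; [apply scale_convex_body; auto|].
    split; [intros C; apply HnoK; eapply contains_copy_scale; eauto | apply scale_width; auto]. }
  apply (Rmult_le_reg_l n); auto; field_simplify; lra.
Qed.

Lemma Flt_le_scale_of_FltR_le d n lam (c : pt) X r :
  0 < n -> 0 < lam -> convex d X ->
  (forall y, inRd d y -> (forall i, (i < d)%nat -> c i <= y i <= c i + / lam) -> X y) ->
  FltR_le d X r -> Flt_le d (scale_set n X) ((n + lam) * r).
Proof.
  intros Hn Hl Hconv Hcube Hr w (K & HK & HnoK & Hw).
  assert (Hs : 0 < / (n + lam)) by (apply Rinv_0_lt_compat; lra).
  assert (Hle : / (n + lam) * w <= r).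
  { apply Hr; exists (scale_set (/ (n + lam)) K); split; [apply scale_convex_body; auto|].
    split; [intros C; apply HnoK; apply (contains_Rcopy_shrink d n lam c X K); auto | apply scale_width; auto]. }
  apply (Rmult_le_compat_l (n + lam)) in Hle; [field_simplify in Hle; lra | lra].
Qed.

Lemma FltR_lub_nonneg d X L : is_lub (FltRSet d X) L -> 0 <= L.
Proof.
  intros [Hub Hleast]; destruct (Rle_lt_dec 0 L) as [|Hneg]; auto.
  assert (L <= L - 1); [|lra].
  apply Hleast; intros w (K & HK & HnoK & Hw).
  assert (0 <= w) by (eapply width_nonneg; eauto).
  assert (w <= L) by (apply Hub; exists K; auto); lra.
Qed.

Lemma squeeze_rate L M n lam eps :
  0 <= L -> 0 < lam -> 0 < eps -> 0 < n -> lam * L / eps < n ->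
  L <= M / n -> M <= (n + lam) * L -> Rabs (M / n - L) < eps.
Proof.
  intros HL Hl He Hn HN Hlow Hup.
  assert (Hrate : lam * L < eps * n)
    by (apply (Rmult_lt_compat_l eps) in HN; [field_simplify in HN; lra | auto]).
  assert (M / n <= L + lam * L / n) by (apply (Rmult_le_reg_l n); auto; field_simplify; lra).
  assert (lam * L / n < eps) by (apply (Rmult_lt_reg_l n); auto; field_simplify; lra).
  rewrite Rabs_right; lra.
Qed.

Theorem mainTheorem9 (d : nat) (X : pt -> Prop) (lam : R) (c : pt) :
  convex_body d X -> 0 < lam -> inRd d c ->
  (forall y, inRd d y -> (forall i, (i < d)%nat -> c i <= y i <= c i + / lam) -> X y) ->
  (forall n, 0 < n ->
     (forall r, Flt_le d (scale_set n X) r -> FltR_le d X (r / n)) /\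
     (forall r, FltR_le d X r -> Flt_le d (scale_set n X) ((n + lam) * r))) /\
  (forall L, is_lub (FltRSet d X) L ->
     forall eps, 0 < eps -> exists N, forall n, 0 < n -> N < n ->
       forall M, is_lub (FltSet d (scale_set n X)) M -> Rabs (M / n - L) < eps).
Proof.
  intros (_ & _ & Hconv & _) Hl _ Hcube.
  split.
  - intros n Hn; split; intros r Hr.
    + apply FltR_le_of_Flt_le_scale; auto.
    + eapply Flt_le_scale_of_FltR_le; eauto.
  - intros L HL eps He; exists (lam * L / eps); intros n Hn HN M HM.
    apply squeeze_rate with lam; auto.
    + apply (FltR_lub_nonneg d X), HL.
    + apply HL, FltR_le_of_Flt_le_scale; auto; apply HM.
    + apply HM; eapply Flt_le_scale_of_FltR_le; eauto; apply HL.
Qed.
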